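(* Let $n\ge 1$ and $k\in\{0,1,\dots,n-1\}$ be integers. Then $$B_{k}^{(-n)}=\frac{1}{n!\binom{n+k}{k}}\sum_{j=0}^{n+k-1}E(n+k,j)\binom{j}{k}.$$
   Context: The Bernoulli numbers of higher order $B_j^{(a)}$ (for integer $a$) are defined by $\sum_{j=0}^{\infty}B_{j}^{(a)}\frac{t^{j}}{j!}=\left(\frac{t}{e^{t}-1}\right)^{a}$. For $m\ge 1$ and $i=0,1,\dots,m-1$, the Eulerian numbers are $E(m,i)=\sum_{j=0}^{i}(-1)^{j}\binom{m+1}{j}(i+1-j)^{m}$. *)

From mathcomp Require Import all_boot all_order all_algebra.
Set Implicit Arguments. Unset Strict Implicit. Unset Printing Implicit Defensive.
Import Order.TTheory GRing.Theory Num.Theory.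
Local Open Scope ring_scope.

(* formal power series: n |-> coefficient of t^n *)
Definition ps := nat -> rat.

Definition ps_one : ps := fun n => (n == 0)%:R.

Definition ps_mul (a b : ps) : ps :=
  fun n => \sum_(i < n.+1) a i * b (n - i)%N.

Definition ps_pow (a : ps) (m : nat) : ps := iter m (ps_mul a) ps_one.

(* coefficients 0..n of the multiplicative inverse of a (assuming a 0 != 0) *)
Fixpoint ps_inv_upto (a : ps) (n : nat) : seq rat :=
  match n with
  | 0 => [:: (a 0%N)^-1]
  | n'.+1 => let s := ps_inv_upto a n' in
      rcons s (- (a 0%N)^-1 * \sum_(i < n'.+1) a i.+1 * nth 0 s (n' - i)%N)
  end.

Definition ps_inv (a : ps) : ps := fun n => nth 0 (ps_inv_upto a n) n.

(* (e^t - 1)/t = sum_m t^m/(m+1)! *)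
Definition expm1_div_t : ps := fun m => ((m.+1)`!%:R)^-1.

Definition t_div_expm1 : ps := ps_inv expm1_div_t.

Definition hbern_gf (a : int) : ps :=
  match a with
  | Posz m => ps_pow t_div_expm1 m
  | Negz m => ps_pow expm1_div_t m.+1
  end.

(* Bernoulli numbers of higher order B_j^(a): sum_j B_j^(a) t^j/j! = (t/(e^t-1))^a *)
Definition hbern (a : int) (j : nat) : rat := (j`!)%:R * hbern_gf a j.

Definition eulerian (m i : nat) : int :=
  \sum_(j < i.+1) (-1) ^+ j * ('C(m.+1, j))%:Z * (((i.+1 - j) ^ m)%N)%:Z.

From mathcomp Require Import all_boot all_order all_algebra.
From mathcomp Require Import ring zify.
Import Order.TTheory GRing.Theory Num.Theory.
Local Open Scope ring_scope.

(* Since ((e^t - 1)/t)^n = t^-n (e^t - 1)^n and (e^t - 1)^n = sum_i (-1)^(n-i) C(n,i) e^(it),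
   the coefficient B_k^(-n)/k! is the n-th forward difference of x^(n+k) at 0, divided by
   (n+k)!.  On the Eulerian side, the symmetry E(m,j) = E(m,m-1-j) followed by expanding
   E(m,j) and exchanging the sums writes sum_j E(m,j) C(j,k) as sum_q (q+1)^m c_q, where
   c_q is an alternating convolution of binomials; iterating Pascal's rule evaluates c_q to
   (-1)^(n-1-q) C(n,q+1) for m = n+k, which are exactly the coefficients of that n-th
   difference. *)

Lemma signr_subn (R : pzRingType) (m n : nat) : (n <= m)%N ->
  (-1) ^+ (m - n) = (-1) ^+ m * (-1) ^+ n :> R.
Proof. by move=> le_nm; rewrite -signr_odd oddB // signr_addb !signr_odd. Qed.

Lemma signrMK (R : pzRingType) (n : nat) : (-1) ^+ n * (-1) ^+ n = 1 :> R.
Proof. by rewrite -expr2 sqrr_sign. Qed.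

Section ForwardDifference.
Variable R : comNzRingType.
Implicit Types (f g : nat -> R) (N d : nat).

Definition fdiff N f : R :=
  \sum_(i < N.+1) (-1) ^+ (N - i) * 'C(N, i)%:R * f i.

Lemma eq_fdiff N f g : f =1 g -> fdiff N f = fdiff N g.
Proof. by move=> fg; apply: eq_bigr => i _; rewrite fg. Qed.

Lemma fdiffB N f g : fdiff N (fun i => f i - g i) = fdiff N f - fdiff N g.
Proof. by rewrite /fdiff -sumrB; apply: eq_bigr => i _; ring. Qed.

Lemma fdiffZ N a f : fdiff N (fun i => a * f i) = a * fdiff N f.
Proof. by rewrite /fdiff mulr_sumr; apply: eq_bigr => i _; ring. Qed.

Lemma fdiff_sum N d (h : nat -> nat -> R) :
  fdiff N (fun i => \sum_(e < d) h e i) = \sum_(e < d) fdiff N (h e).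
Proof. by rewrite /fdiff exchange_big; apply: eq_bigr => i _; rewrite mulr_sumr. Qed.

Lemma fdiffS N f : fdiff N.+1 f = fdiff N (fun i => f i.+1) - fdiff N f.
Proof.
have -> : fdiff N.+1 f = (-1) ^+ N.+1 * f 0%N +
    (\sum_(i < N.+1) (-1) ^+ (N - i) * 'C(N, i.+1)%:R * f i.+1
     + fdiff N (fun i => f i.+1)).
  rewrite /fdiff big_ord_recl /= subn0 bin0 mulr1 -big_split /=; congr (_ + _).
  by apply: eq_bigr => i _; rewrite /bump /= add1n subSS binS natrD; ring.
have -> : fdiff N f = (-1) ^+ N * f 0%N +
    \sum_(i < N) (-1) ^+ (N - i.+1) * 'C(N, i.+1)%:R * f i.+1.
  by rewrite /fdiff big_ord_recl /= subn0 bin0 mulr1.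
rewrite big_ord_recr /= bin_small // mulr0 mul0r addr0.
have -> : \sum_(i < N) (-1) ^+ (N - i) * 'C(N, i.+1)%:R * f i.+1
    = - \sum_(i < N) (-1) ^+ (N - i.+1) * 'C(N, i.+1)%:R * f i.+1.
  by rewrite -sumrN; apply: eq_bigr => i _; rewrite -(subnSK (ltn_ord i)) exprS; ring.
rewrite exprS; ring.
Qed.

Lemma exprD1_subr (x : R) d :
  (x + 1) ^+ d - x ^+ d = \sum_(e < d) 'C(d, e)%:R * x ^+ e.
Proof.
rewrite exprD1n big_ord_recr /= binn mulr1n addrK.
by apply: eq_bigr => i _; rewrite mulr_natl.
Qed.

Lemma fdiffS_exprD (c : R) N d :
  fdiff N.+1 (fun i => (c + i%:R) ^+ d) =
  \sum_(e < d) 'C(d, e)%:R * fdiff N (fun i => (c + i%:R) ^+ e).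
Proof.
rewrite fdiffS -fdiffB.
rewrite (@eq_fdiff _ _ (fun i => \sum_(e < d) 'C(d, e)%:R * (c + i%:R) ^+ e)).
  rewrite (fdiff_sum N d (fun e i => 'C(d, e)%:R * (c + i%:R) ^+ e)).
  by apply: eq_bigr => e _; rewrite fdiffZ.
by move=> i; rewrite -exprD1_subr mulrSr addrA.
Qed.

Lemma fdiff_exprD_small (c : R) N d :
  (d < N)%N -> fdiff N (fun i => (c + i%:R) ^+ d) = 0.
Proof.
elim: N d => [//|N IHN] d ltdN; rewrite fdiffS_exprD big1 // => e _.
by rewrite IHN ?mulr0 // (leq_trans (ltn_ord e)).
Qed.

Definition fdiffX N d := fdiff N (fun i => i%:R ^+ d).

Lemma fdiffXE N d : fdiffX N d = fdiff N (fun i => (0 + i%:R) ^+ d).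
Proof. by apply: eq_fdiff => i; rewrite add0r. Qed.

Lemma fdiffXS N d : fdiffX N.+1 d = \sum_(e < d) 'C(d, e)%:R * fdiffX N e.
Proof. by rewrite fdiffXE fdiffS_exprD; apply: eq_bigr => e _; rewrite fdiffXE. Qed.

Lemma fdiffX_small N d : (d < N)%N -> fdiffX N d = 0.
Proof. by move=> ltdN; rewrite fdiffXE fdiff_exprD_small. Qed.

Lemma sum_signr_bin_exprB_eq0 (x : R) m :
  \sum_(l < m.+2) (-1) ^+ l * 'C(m.+1, l)%:R * (x - l%:R) ^+ m = 0.
Proof.
transitivity ((-1) ^+ m.+1 * (-1) ^+ m * fdiff m.+1 (fun i => (- x + i%:R) ^+ m));
  last by rewrite fdiff_exprD_small ?mulr0.
rewrite /fdiff mulr_sumr; apply: eq_bigr => l _; rewrite signr_subn; last by rewrite -ltnS.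
have -> : (x - l%:R) ^+ m = (-1) ^+ m * (- x + l%:R) ^+ m.
  by rewrite -exprMn; congr (_ ^+ _); ring.
symmetry; transitivity ((-1) ^+ m.+1 * (-1) ^+ m.+1 *
  ((-1) ^+ m * ((-1) ^+ l * 'C(m.+1, l)%:R * (- x + l%:R) ^+ m))); first ring.
by rewrite signrMK mul1r; ring.
Qed.

End ForwardDifference.

Arguments fdiff {R} N f.
Arguments fdiffX {R} N d.

Lemma natr_fact_neq0 (R : numDomainType) n : n`!%:R != 0 :> R.
Proof. by rewrite pnatr_eq0 -lt0n fact_gt0. Qed.

Lemma natr_bin_neq0 (R : numDomainType) {n m : nat} : (m <= n)%N -> 'C(n, m)%:R != 0 :> R.
Proof. by move=> lemn; rewrite pnatr_eq0 -lt0n bin_gt0. Qed.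

Lemma natr_bin_div_fact (R : numFieldType) a b :
  'C(a + b, a)%:R / (a + b)`!%:R = (a`!%:R * b`!%:R)^-1 :> R.
Proof.
have := bin_fact (leq_addr b a); rewrite addKn => <-.
have := natr_bin_neq0 R (leq_addr b a).
have := natr_fact_neq0 R a; have := natr_fact_neq0 R b.
rewrite !natrM; move: ('C(_, _)%:R) => c fb_neq0 fa_neq0 c_neq0.
by field; rewrite fa_neq0 fb_neq0 c_neq0.
Qed.

Lemma big_ord_addn_rev {V : nmodType} n k (G : nat -> V) :
  (forall j, (j < n)%N -> G j = 0) ->
  \sum_(j < n + k.+1) G j = \sum_(i < k.+1) G (n + (k - i))%N.
Proof.
move=> G_small; rewrite big_split_ord /= big1 ?add0r; last by move=> i _; apply: G_small.
by rewrite (reindex_inj rev_ord_inj) /=; apply: eq_bigr => i _; rewrite subSS.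
Qed.

Lemma coef_ps_pow_expm1_div_t n k :
  ps_pow expm1_div_t n k = fdiffX n (n + k) / (n + k)`!%:R.
Proof.
elim: n k => [|n IHn] k.
  rewrite /ps_pow /= /ps_one /fdiffX /fdiff big_ord1 add0n subnn bin0 mulr1 mul1r.
  by case: k => [|k]; rewrite ?fact0 ?divr1 // exprS mul0r mul0r.
rewrite [LHS]/ps_pow /= -/(ps_pow expm1_div_t n) /ps_mul.
under eq_bigr => i _ do rewrite IHn.
rewrite addSnnS fdiffXS mulr_suml.
rewrite (big_ord_addn_rev n k (fun j => 'C(n + k.+1, j)%:R * fdiffX n j / (n + k.+1)`!%:R));
  last by move=> j ltjn; rewrite fdiffX_small // mulr0 mul0r.
apply: eq_bigr => i _; rewrite /expm1_div_t.
have le_ik : (i <= k)%N by rewrite -ltnS.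
have -> : (n + k.+1 = n + (k - i) + i.+1)%N by lia.
rewrite mulrAC natr_bin_div_fact invfM; ring.
Qed.

Section AlternatingBinomialConvolution.
Variable R : comNzRingType.

Lemma sum_signr_bin_prefix N a :
  \sum_(l < a.+1) (-1) ^+ l * 'C(N.+1, l)%:R = (-1) ^+ a * 'C(N, a)%:R :> R.
Proof.
elim: a => [|a IHa]; first by rewrite big_ord1 !bin0.
by rewrite big_ord_recr /= IHa binS natrD exprS; ring.
Qed.

(* The coefficient of x^a in (1 - x)^N * x^k / (1 - x)^(k+1) = x^k (1 - x)^(N-k-1). *)
Definition altbin_conv N k a : R :=
  \sum_(l < a.+1) (-1) ^+ l * 'C(N, l)%:R * 'C(a - l, k)%:R.

Lemma altbin_convSS N k a :
  altbin_conv N k.+1 a.+1 = altbin_conv N k.+1 a + altbin_conv N k a.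
Proof.
rewrite /altbin_conv big_ord_recr /= subnn bin0n mulr0 addr0 -big_split /=.
apply: eq_bigr => l _; rewrite subSn; last by rewrite -ltnS.
by rewrite binS natrD; ring.
Qed.

Lemma altbin_conv_small N k a : (a < k)%N -> altbin_conv N k a = 0.
Proof.
by move=> ltak; apply: big1 => l _; rewrite (@bin_small (a - l)) ?mulr0 //; lia.
Qed.

Lemma altbin_conv_cumulative N k b :
  altbin_conv N k.+1 b = \sum_(c < b) altbin_conv N k c.
Proof.
elim: b => [|b IHb]; first by rewrite big_ord0 /altbin_conv big_ord1 bin0n mulr0.
by rewrite altbin_convSS IHb big_ord_recr.
Qed.

Lemma altbin_convE n k a :
  altbin_conv (n + k).+1 k (a + k) = (-1) ^+ a * 'C(n, a)%:R.
Proof.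
elim: k n a => [|k IHk] n a.
  rewrite /altbin_conv !addn0 -sum_signr_bin_prefix.
  by apply: eq_bigr => l _; rewrite bin0 mulr1.
rewrite altbin_conv_cumulative (_ : (a + k.+1 = k + a.+1)%N); last by lia.
rewrite big_split_ord /= big1 ?add0r; last by move=> c _; apply: altbin_conv_small.
rewrite -sum_signr_bin_prefix; apply: eq_bigr => i _.
by rewrite -addSnnS [(k + _)%N]addnC IHk.
Qed.

End AlternatingBinomialConvolution.

Arguments altbin_conv {R} N k a.

Lemma eulerianE (R : pzRingType) m j :
  (eulerian m j)%:~R =
  \sum_(l < j.+1) (-1) ^+ l * 'C(m.+1, l)%:R * (j.+1 - l)%:R ^+ m :> R.
Proof.
rewrite /eulerian rmorph_sum; apply: eq_bigr => l _.
by rewrite !rmorphM /= rmorphXn /= rmorphN1 -natrX.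
Qed.

Lemma eulerianE_full (R : pzRingType) m j : (0 < m)%N -> (j < m)%N ->
  (eulerian m j)%:~R =
  \sum_(l < m.+2) (-1) ^+ l * 'C(m.+1, l)%:R * (j.+1 - l)%:R ^+ m :> R.
Proof.
move=> m_gt0 ltjm; rewrite eulerianE.
rewrite (big_ord_widen m.+2 (fun l => (-1) ^+ l * 'C(m.+1, l)%:R * (j.+1 - l)%:R ^+ m));
  last by lia.
rewrite big_mkcond /=; apply: eq_bigr => l _; case: ifP => // /negbT.
rewrite -leqNgt -subn_eq0 => /eqP ->.
by rewrite expr0n eqn0Ngt m_gt0 mulr0.
Qed.

Lemma eulerian_sym m j : (0 < m)%N -> (j < m)%N -> eulerian m j = eulerian m (m - j.+1).
Proof.
move=> m_gt0 ltjm; apply: (@intr_inj rat); apply/eqP; rewrite -subr_eq0; apply/eqP.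
rewrite -(sum_signr_bin_exprB_eq0 _ (j.+1)%:R m) !eulerianE_full //; last by lia.
rewrite [X in _ - X](reindex_inj rev_ord_inj) /= -sumrB; apply: eq_bigr => l _.
have ltlm2 : (l < m.+2)%N := ltn_ord l.
rewrite subSS (_ : ((m - j.+1).+1 - (m.+1 - l) = l - j.+1)%N); last by lia.
have lelm1 : (l <= m.+1)%N by rewrite -ltnS.
rewrite bin_sub // signr_subn //.
have zero_pow : 0%:R ^+ m = 0 :> rat by rewrite expr0n eqn0Ngt m_gt0.
case: (leqP l j.+1) => [lelj | ltjl].
  by rewrite natrB // (_ : l - j.+1 = 0)%N ?zero_pow; [ring | lia].
rewrite (_ : j.+1 - l = 0)%N ?zero_pow; last by lia.
have -> : (j.+1%:R - l%:R) ^+ m = (-1) ^+ m * (l - j.+1)%:R ^+ m :> rat.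
  by rewrite natrB 1?ltnW // -exprMn; congr (_ ^+ _); ring.
by rewrite exprS; ring.
Qed.

Lemma big_triangle_antidiag {V : nmodType} m (H : nat -> nat -> V) :
  \sum_(j < m) \sum_(l < j.+1) H l (j - l)%N = \sum_(q < m) \sum_(l < m - q) H l q.
Proof.
elim: m => [|m IHm]; first by rewrite !big_ord0.
have -> : \sum_(q < m.+1) \sum_(l < m.+1 - q) H l q
    = \sum_(q < m.+1) (\sum_(l < m - q) H l q + H (m - q)%N q).
  apply: eq_bigr => q _; have leqm : (q <= m)%N by rewrite -ltnS.
  by rewrite subSn // big_ord_recr.
rewrite big_ord_recr /= IHm big_split /= [X in _ = X + _]big_ord_recr /= subnn big_ord0 addr0.
congr (_ + _); rewrite (reindex_inj rev_ord_inj) /=; apply: eq_bigr => l _.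
have lelm : (l <= m)%N by rewrite -ltnS.
by rewrite subSS subKn.
Qed.

Section EulerianBinomialSum.
Variable R : comNzRingType.

(* Reflect j to m-1-j, expand the Eulerian number and collect the powers (q+1)^m. *)
Lemma sum_eulerian_bin_altbin m k : (0 < m)%N ->
  \sum_(j < m) (eulerian m j)%:~R * 'C(j, k)%:R =
  \sum_(q < m) q.+1%:R ^+ m * altbin_conv m.+1 k (m - q.+1) :> R.
Proof.
move=> m_gt0.
pose H l q : R := (-1) ^+ l * 'C(m.+1, l)%:R * q.+1%:R ^+ m * 'C(m - (l + q).+1, k)%:R.
have reflect_expand (j : 'I_m) : (eulerian m (m - j.+1))%:~R * 'C(m - j.+1, k)%:R
    = \sum_(l < j.+1) H l (j - l)%N.
  have ltjm := ltn_ord j.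
  rewrite eulerian_sym //; last by lia.
  rewrite (_ : m - (m - j.+1).+1 = j)%N; last by lia.
  rewrite eulerianE mulr_suml; apply: eq_bigr => l _.
  have lelj : (l <= j)%N by rewrite -ltnS.
  by rewrite /H subSn // subnKC.
have collect (q : 'I_m) :
    \sum_(l < m - q) H l q = q.+1%:R ^+ m * altbin_conv m.+1 k (m - q.+1).
  have ltqm := ltn_ord q.
  rewrite /altbin_conv subnSK // mulr_sumr; apply: eq_bigr => l _.
  have ltlmq := ltn_ord l.
  rewrite /H (_ : m - q.+1 - l = m - (l + q).+1)%N; last by lia.
  ring.
rewrite (reindex_inj rev_ord_inj) /= (eq_bigr _ (fun j _ => reflect_expand j)).
by rewrite big_triangle_antidiag; apply: eq_bigr => q _; rewrite collect.
Qed.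

(* The partial sums of alternating binomials collapse to the coefficients of the n-th difference. *)
Lemma sum_eulerian_bin n k : (0 < n)%N ->
  \sum_(j < n + k) (eulerian (n + k) j)%:~R * 'C(j, k)%:R = fdiffX n (n + k) :> R.
Proof.
move=> n_gt0; have nk_gt0 : (0 < n + k)%N by lia.
rewrite sum_eulerian_bin_altbin // big_split_ord /= [X in _ + X]big1 ?addr0; last first.
  by move=> q _; rewrite altbin_conv_small ?mulr0 //; have := ltn_ord q; lia.
rewrite /fdiffX /fdiff big_ord_recl /= expr0n (negbTE (lt0n_neq0 nk_gt0)) mulr0 add0r.
apply: eq_bigr => q _; have ltqn := ltn_ord q.
rewrite (_ : n + k - q.+1 = (n - q.+1) + k)%N; last by lia.
by rewrite altbin_convE bin_sub //; ring.
Qed.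

End EulerianBinomialSum.

Theorem mainTheorem4 (n k : nat) (hn : (1 <= n)%N) (hk : (k < n)%N) :
  hbern (- (n%:Z)) k =
    ((n`! * 'C(n + k, k))%N%:R)^-1 *
      \sum_(j < n + k) (eulerian (n + k) j)%:~R * ('C(j, k))%:R.
Proof.
(* [- n.+1%:Z] computes to [Negz n]. *)
case: n hn hk => [//|n] _ _.
rewrite /hbern (_ : hbern_gf _ = ps_pow expm1_div_t n.+1) //.
rewrite coef_ps_pow_expm1_div_t sum_eulerian_bin //.
have := bin_fact (leq_addl n.+1 k); rewrite addnK => <-.
move: (natr_bin_neq0 rat (leq_addl n.+1 k)) (natr_fact_neq0 rat k) (natr_fact_neq0 rat n.+1).
move: 'C(_, _) k`! n.+1`! => c fk fn c_neq0 fk_neq0 fn_neq0.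
by rewrite !natrM; field; rewrite c_neq0 fk_neq0 fn_neq0.
Qed.
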